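(* Let $G$ be a finite simple graph whose vertices carry positive integer weights, let $t\in\mathbb{N}$, and let $v\in V(G)$ have weight $t$. Let $G(v)$ denote the weighted graph obtained from $G$ by replacing $v$ with an independent set $\{v_1,\dots,v_t\}$ of $t$ new vertices, each of weight $1$, where each $v_j$ is adjacent to exactly the vertices $w$ that were adjacent to $v$ in $G$; all other vertices, edges and weights are unchanged. Then weighted Grim played on $G$ and weighted Grim played on $G(v)$ have the same outcome: $G$ is an $\mathcal{N}$ position if and only if $G(v)$ is an $\mathcal{N}$ position.
   Context: Grim is a two-player game on a finite simple undirected graph. Any isolated vertices of the starting graph are deleted before play begins. Players alternate moves; in ordinary (unweighted) Grim a move consists of selecting a vertex of the current graph and deleting it together with all its incident edges, after which every vertex that has become isolated is also deleted. The player who makes the last legal move wins (a player facing the empty graph has no move and loses). In weighted Grim each vertex carries a positive integer weight; a vertex of weight $t$ is deleted only once it has been selected $t$ times (each selection is a move and lowers its remaining weight by one, the selection that brings it to zero deleting it with its incident edges), or when it becomes isolated, in which case it is deleted; ordinary Grim is weighted Grim with all weights equal to $1$. A position is an $\mathcal{N}$ position if the player about to move has a winning strategy, and a $\mathcal{P}$ position otherwise. *)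

From mathcomp Require Import all_boot.
Set Implicit Arguments. Unset Strict Implicit. Unset Printing Implicit Defensive.

(* Weighted Grim on a finite simple graph (T, e), e symmetric and irreflexive.
   A position is a weight function w : T -> nat; vertex x is present iff
   0 < w x (remaining weight). *)

Definition clean (T : finType) (e : rel T) (w : T -> nat) : T -> nat :=
  fun x => if [exists y, e x y && (0 < w y)] then w x else 0.

Definition grim_move (T : finType) (e : rel T) (w : T -> nat) (v : T) : T -> nat :=
  clean e (fun x => if x == v then (w x).-1 else w x).

Fixpoint win_fuel (T : finType) (e : rel T) (n : nat) (w : T -> nat) : bool :=
  match n with
  | 0 => false
  | n'.+1 => [exists v, (0 < w v) && ~~ win_fuel e n' (grim_move e w v)]
  end.

(* The starting weighted graph (with isolated vertices deleted first) is an
   N position. Fuel = total weight, which bounds the length of any play. *)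
Definition grim_N (T : finType) (e : rel T) (w : T -> nat) : bool :=
  win_fuel e (\sum_(x : T) w x) (clean e w).

Definition blowT (T : finType) (v : T) (t : nat) : finType :=
  ({x : T | x != v} + 'I_t)%type.

Definition blow_e (T : finType) (e : rel T) (v : T) (t : nat) : rel (blowT v t) :=
  fun a b => match a, b with
  | inl x, inl y => e (val x) (val y)
  | inl x, inr _ => e (val x) v
  | inr _, inl y => e v (val y)
  | inr _, inr _ => false
  end.

Definition blow_w (T : finType) (w : T -> nat) (v : T) (t : nat) : blowT v t -> nat :=
  fun a => match a with
  | inl x => w (val x)
  | inr _ => 1
  end.

Arguments blow_e {T} e v t.
Arguments blow_w {T} w v t.

From mathcomp Require Import all_boot.
Set Implicit Arguments. Unset Strict Implicit. Unset Printing Implicit Defensive.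

(* A position w of G corresponds to a position w' of G(v) when they agree off
   v, every copy of v has remaining weight at most 1, and the remaining weight
   of v equals the number of present copies.  Since v and its copies have the
   same neighbours and the copies are pairwise non-adjacent, the two positions
   have the same isolated vertices, and selecting v corresponds to selecting
   any present copy.  So the correspondence is preserved by cleanup and by
   matching moves, hence by the game, and it holds between the starting
   positions, whose total weights also agree. *)

Section BlowUp.
Variables (T : finType) (e : rel T) (e_irr : irreflexive e) (v : T) (t : nat).

Local Notation T' := (blowT v t).
Local Notation e' := (blow_e e v t).

Definition blow_sim (w : T -> nat) (w' : T' -> nat) :=
  [/\ forall x : {x : T | x != v}, w' (inl x) = w (val x),
      forall j, w' (inr j) <= 1 &
      #|[pred j : 'I_t | 0 < w' (inr j)]| = w v].

Lemma blow_sim_copy_present w w' :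
  blow_sim w w' -> 0 < w v -> exists j, 0 < w' (inr j).
Proof.
by case=> _ _ <- /card_gt0P[j]; exists j.
Qed.

Lemma blow_sim_nbr_inl w w' (x : {x : T | x != v}) : blow_sim w w' ->
  [exists b, e' (inl x) b && (0 < w' b)] = [exists y, e (val x) y && (0 < w y)].
Proof.
move=> sim; case: (sim) => w'_inl _ w'_copies; apply/existsP/existsP.
- case=> -[y|j] /andP[/= exy wy].
  + by exists (val y); rewrite exy -w'_inl.
  + exists v; rewrite exy -w'_copies /=.
    by apply/card_gt0P; exists j.
- case=> y /andP[exy wy]; have [yv|yv] := eqVneq y v.
  + subst y; have [j wj] := blow_sim_copy_present sim wy.
    by exists (inr j); rewrite /= exy.
  + by exists (inl (exist _ y yv)); rewrite /= exy w'_inl.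
Qed.

Lemma blow_sim_nbr_inr w w' (j : 'I_t) : blow_sim w w' ->
  [exists b, e' (inr j) b && (0 < w' b)] = [exists y, e v y && (0 < w y)].
Proof.
case=> w'_inl _ _; apply/existsP/existsP.
- case=> -[y|k] /andP[/= evy wy] //.
  by exists (val y); rewrite evy -w'_inl.
- case=> y /andP[evy wy]; have [eyv|yv] := eqVneq y v.
  + by move: evy; rewrite eyv e_irr.
  + by exists (inl (exist _ y yv)); rewrite /= evy w'_inl.
Qed.

Lemma blow_sim_clean w w' :
  blow_sim w w' -> blow_sim (clean e w) (clean e' w').
Proof.
move=> sim; case: (sim) => w'_inl w'_le1 w'_copies; split.
- by move=> x; rewrite /clean (blow_sim_nbr_inl x sim) w'_inl.
- by move=> j; rewrite /clean; case: ifP => // _; apply: w'_le1.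
- rewrite /clean; case: ifP => nbr_v.
  + by rewrite -w'_copies; apply: eq_card => j /=; rewrite (blow_sim_nbr_inr j sim) nbr_v.
  + by apply: eq_card0 => j /=; rewrite (blow_sim_nbr_inr j sim) nbr_v.
Qed.

Lemma blow_sim_move_inl w w' (x : {x : T | x != v}) : blow_sim w w' ->
  blow_sim (grim_move e w (val x)) (grim_move e' w' (inl x)).
Proof.
case=> w'_inl w'_le1 w'_copies; apply: blow_sim_clean; split => //=.
- by move=> y; rewrite w'_inl.
- by rewrite eq_sym (negbTE (valP x)).
Qed.

Lemma blow_sim_move_inr w w' (j0 : 'I_t) : blow_sim w w' -> 0 < w' (inr j0) ->
  blow_sim (grim_move e w v) (grim_move e' w' (inr j0)).
Proof.
case=> w'_inl w'_le1 w'_copies wj0; apply: blow_sim_clean; split => /=.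
- by move=> y; rewrite w'_inl (negbTE (valP y)).
- by move=> j; case: ifP => _ //; rewrite (leq_trans (leq_pred _) (w'_le1 j)).
- have wj0_1 : w' (inr j0) = 1 by apply/eqP; rewrite eqn_leq w'_le1.
  rewrite eqxx -w'_copies [in RHS](cardD1 j0) inE wj0 add1n /=.
  apply: eq_card => j; rewrite !inE.
  have -> : (inr j == inr j0 :> T') = (j == j0) by [].
  by case: eqP => [->|_]; rewrite ?wj0_1.
Qed.

Lemma blow_sim_win n w w' :
  blow_sim w w' -> win_fuel e n w = win_fuel e' n w'.
Proof.
elim: n w w' => [//|n IH] w w' sim /=; case: (sim) => w'_inl _ w'_copies.
apply/existsP/existsP.
- case=> x /andP[wx lose]; have [xv|xv] := eqVneq x v.
  + subst x; have [j wj] := blow_sim_copy_present sim wx.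
    by exists (inr j); rewrite wj -(IH _ _ (blow_sim_move_inr sim wj)).
  + exists (inl (exist _ x xv)); rewrite w'_inl wx.
    by rewrite -(IH _ _ (blow_sim_move_inl (exist _ x xv) sim)).
- case=> -[x|j] /andP[wx lose].
  + exists (val x); rewrite -w'_inl wx.
    by rewrite (IH _ _ (blow_sim_move_inl x sim)).
  + exists v; rewrite (IH _ _ (blow_sim_move_inr sim wx)) lose andbT.
    by rewrite -w'_copies; apply/card_gt0P; exists j.
Qed.

End BlowUp.

Lemma blow_sim_start (T : finType) (w : T -> nat) (v : T) :
  blow_sim w (blow_w w v (w v)).
Proof.
split=> //; rewrite -[w v in RHS]card_ord.
by apply: eq_card => j; rewrite inE.
Qed.

Lemma sum_blow_w (T : finType) (w : T -> nat) (v : T) :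
  \sum_(a : blowT v (w v)) blow_w w v (w v) a = \sum_(x : T) w x.
Proof.
rewrite big_sumType /= -(big_sub (fun x => x != v)) [RHS](bigD1 v) //= addnC.
by rewrite sum1_card card_ord.
Qed.

Theorem lemma2p2 (T : finType) (e : rel T) (e_sym : symmetric e)
  (e_irr : irreflexive e) (w : T -> nat) (w_pos : forall x, 0 < w x)
  (v : T) (t : nat) (wv : w v = t) :
  grim_N e w <-> grim_N (blow_e e v t) (blow_w w v t).
Proof.
subst t; rewrite /grim_N sum_blow_w.
by rewrite (blow_sim_win e_irr _ (blow_sim_clean e_irr (blow_sim_start w v))).
Qed.
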